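(* Let $(\beta,\gamma)$ be antiferromagnetic and $\lambda,\lambda_1,\lambda_2>0$. Let $G=(V,E)$ be a graph and $S\subseteq V$. For $i\in\{1,2\}$ let $\boldsymbol{\lambda}_i$ be the field vector on $V$ in which every $v\in S$ has field $\lambda_i$ and every $v\in V\setminus S$ has field $\lambda$, and let $\mu_i=\mu_{G;\beta,\gamma,\boldsymbol{\lambda}_i}$. Then for every $v\in V$, $$\big|\mathbf{E}_{\sigma\sim\mu_2}[\sigma(v)]-\mathbf{E}_{\sigma\sim\mu_1}[\sigma(v)]\big|\leq 2|S|\,\Big|\frac{\lambda_2}{\lambda_1}-1\Big|.$$
   Context: A pair $(\beta,\gamma)$ with $\beta,\gamma\geq0$ is antiferromagnetic if $\beta\gamma\in[0,1)$ and at least one is nonzero. For a graph $G=(V,E)$ and a field vector $\boldsymbol{\lambda}=(\lambda_v)_{v\in V}$ of positive reals, $\mu_{G;\beta,\gamma,\boldsymbol{\lambda}}(\sigma)=w(\sigma)/Z$ for $\sigma:V\to\{0,1\}$, where $w(\sigma)=\beta^{m_0(\sigma)}\gamma^{m_1(\sigma)}\prod_{v:\sigma(v)=1}\lambda_v$, $m_0,m_1$ are the numbers of edges with both endpoints spin $0$, resp. spin $1$ (convention $0^0=1$), and $Z=\sum_\sigma w(\sigma)$. *)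

From mathcomp Require Import all_boot all_order all_algebra.
Set Implicit Arguments. Unset Strict Implicit. Unset Printing Implicit Defensive.
Import Order.TTheory GRing.Theory Num.Theory.
Local Open Scope ring_scope.

Definition simple_graph (V : finType) (E : {set {set V}}) : Prop :=
  forall f, f \in E -> #|f| = 2%N.

(* spin configurations sigma : V -> {0,1}; true = spin 1 *)
Definition config (V : finType) := {ffun V -> bool}.

Definition mono_edges (V : finType) (E : {set {set V}}) (s : bool)
  (sigma : config V) : nat :=
  #|[set f in E | [forall v in f, sigma v == s]]|.

Definition antiferro (R : realFieldType) (beta gamma : R) : Prop :=
  0 <= beta /\ 0 <= gamma /\ beta * gamma < 1 /\ (beta != 0 \/ gamma != 0).

(* weight w(sigma); x ^+ 0 = 1 gives the convention 0^0 = 1 *)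
Definition weight (R : realFieldType) (V : finType) (E : {set {set V}})
  (beta gamma : R) (lam : V -> R) (sigma : config V) : R :=
  beta ^+ mono_edges E false sigma * gamma ^+ mono_edges E true sigma *
  \prod_(v | sigma v) lam v.

Definition partition_fn (R : realFieldType) (V : finType) (E : {set {set V}})
  (beta gamma : R) (lam : V -> R) : R :=
  \sum_(sigma : config V) weight E beta gamma lam sigma.

Definition gibbs (R : realFieldType) (V : finType) (E : {set {set V}})
  (beta gamma : R) (lam : V -> R) (sigma : config V) : R :=
  weight E beta gamma lam sigma / partition_fn E beta gamma lam.

Definition spin_expect (R : realFieldType) (V : finType) (E : {set {set V}})
  (beta gamma : R) (lam : V -> R) (v : V) : R :=
  \sum_(sigma : config V) gibbs E beta gamma lam sigma * (sigma v)%:R.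

Definition field_vec (R : realFieldType) (V : finType) (S : {set V})
  (lamS lam : R) : V -> R :=
  fun v => if v \in S then lamS else lam.

(** The fields on [S] enter the weight of a configuration [sigma] only
    through the factor [x ^+ k], where [k <= #|S|] counts the spin-1 vertices
    of [S]. Hence, for [lo <= hi], lowering the field from [hi] to [lo]
    decreases every weight, and by at most the factor [(lo / hi) ^+ #|S|], so
    the Gibbs measure at [hi] dominates [(lo / hi) ^+ #|S|] times the Gibbs
    measure at [lo]. A measure dominating [c] times another one is within
    total variation [1 - c] of it, and [1 - q ^+ n <= n * (1 - q)]; this
    already gives the bound without the factor 2. *)

From mathcomp Require Import all_boot all_order all_algebra.
From mathcomp Require Import lra.
Set Implicit Arguments. Unset Strict Implicit. Unset Printing Implicit Defensive.
Import Order.TTheory GRing.Theory Num.Theory.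
Local Open Scope ring_scope.

Lemma dist_expect_dominated (R : realFieldType) (T : finType)
    (p p' f : T -> R) (c : R) :
  (forall t, 0 <= p t) -> \sum_t p t = 1 -> \sum_t p' t = 1 ->
  (forall t, c * p t <= p' t) -> (forall t, 0 <= f t <= 1) ->
  `| \sum_t p' t * f t - \sum_t p t * f t | <= 1 - c.
Proof.
move=> p_ge0 sum_p sum_p' dom f01.
pose r t := p' t - c * p t.
have r_ge0 t : 0 <= r t by rewrite subr_ge0.
have sum_r : \sum_t r t = 1 - c by rewrite sumrB -mulr_sumr sum_p sum_p' mulr1.
have mean_bounds (q : T -> R) : (forall t, 0 <= q t) ->
    0 <= \sum_t q t * f t <= \sum_t q t.
  move=> q_ge0; apply/andP; split.
    by apply: sumr_ge0 => t _; case/andP: (f01 t) => f_ge0 _; exact: mulr_ge0.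
  apply: ler_sum => t _; case/andP: (f01 t) => _ f_le1.
  by rewrite -[leRHS]mulr1 ler_wpM2l.
have /andP[Ep_ge0 Ep_le1] := mean_bounds p p_ge0.
have /andP[Er_ge0 Er_le] := mean_bounds r r_ge0.
rewrite sum_p in Ep_le1; rewrite sum_r in Er_le.
have -> : \sum_t p' t * f t = c * \sum_t p t * f t + \sum_t r t * f t.
  rewrite mulr_sumr -big_split /=; apply: eq_bigr => t _.
  by rewrite /r mulrA -mulrDl addrC subrK.
rewrite ler_norml; apply/andP; split; nra.
Qed.

Lemma one_sub_exprn_le (R : realFieldType) (q : R) (n : nat) :
  0 <= q -> q <= 1 -> 1 - q ^+ n <= n%:R * (1 - q).
Proof.
move=> q_ge0 q_le1; elim: n => [|n IHn]; first by rewrite expr0 subrr mul0r.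
have qn_ge0 : 0 <= q ^+ n by exact: exprn_ge0.
have qn_le1 : q ^+ n <= 1 by exact: exprn_ile1.
rewrite exprS -natr1; nra.
Qed.

Lemma prod_field_vec (R : realFieldType) (V : finType) (S : {set V})
    (x lam : R) (sigma : config V) :
  \prod_(v | sigma v) field_vec S x lam v =
  x ^+ #|[set v in S | sigma v]| * \prod_(v | sigma v && (v \notin S)) lam.
Proof.
rewrite (bigID (mem S)) /= -prodr_const.
congr (_ * _); apply: eq_big => // v; rewrite /field_vec.
- by rewrite inE andbC.
- by case/andP=> _ ->.
- by case/andP=> _ /negbTE ->.
Qed.

Section AntiferroGibbs.

Variables (R : realFieldType) (V : finType) (E : {set {set V}}).
Variables (beta gamma : R).
Hypotheses (beta_ge0 : 0 <= beta) (gamma_ge0 : 0 <= gamma).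
Hypothesis beta_gamma_neq0 : beta != 0 \/ gamma != 0.
Hypothesis E_simple : simple_graph E.

Local Notation weight := (weight E beta gamma).
Local Notation partition_fn := (partition_fn E beta gamma).
Local Notation gibbs := (gibbs E beta gamma).

Lemma weight_ge0 (lam : V -> R) sigma :
  (forall v, 0 <= lam v) -> 0 <= weight lam sigma.
Proof. by move=> lam_ge0; rewrite !mulr_ge0 ?exprn_ge0 ?prodr_ge0. Qed.

Lemma weight_field_vec (S : {set V}) (x lam : R) sigma :
  weight (field_vec S x lam) sigma =
  x ^+ #|[set v in S | sigma v]| * weight (field_vec S 1 lam) sigma.
Proof. by rewrite /weight !prod_field_vec expr1n mul1r mulrCA. Qed.

Lemma mono_edges_const (s : bool) : mono_edges E s [ffun _ => ~~ s] = 0%N.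
Proof.
apply/eqP; rewrite cards_eq0; apply/eqP/setP => f; rewrite !inE.
apply/negP => /andP[fE /forallP mono_f].
have /card_gt0P[u uf] : (0 < #|f|)%N by rewrite E_simple.
by have := mono_f u; rewrite uf ffunE; case: s {mono_f}.
Qed.

(* If [beta != 0] the all-0 configuration has positive weight, otherwise
   [gamma != 0] and the all-1 configuration does. *)
Lemma partition_fn_gt0 (lam : V -> R) :
  (forall v, 0 < lam v) -> 0 < partition_fn lam.
Proof.
move=> lam_gt0; have lam_ge0 v : 0 <= lam v by exact: ltW.
have weight_le sigma : weight lam sigma <= partition_fn lam.
  rewrite /partition_fn (bigD1 sigma) //= lerDl.
  by apply: sumr_ge0 => tau _; exact: weight_ge0.
case: beta_gamma_neq0 => [beta_neq0 | gamma_neq0].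
- apply: lt_le_trans (weight_le [ffun _ => ~~ true]).
  rewrite /weight mono_edges_const expr0 mulr1 big_pred0 => [|v]; last first.
    by rewrite ffunE.
  by rewrite mulr1 exprn_gt0 // lt_def beta_neq0.
- apply: lt_le_trans (weight_le [ffun _ => ~~ false]).
  rewrite /weight mono_edges_const expr0 mul1r.
  by rewrite mulr_gt0 ?exprn_gt0 ?prodr_gt0 // lt_def gamma_neq0.
Qed.

Lemma gibbs_ge0 (lam : V -> R) sigma :
  (forall v, 0 < lam v) -> 0 <= gibbs lam sigma.
Proof.
move=> lam_gt0; rewrite divr_ge0 ?weight_ge0 ?ltW ?partition_fn_gt0 // => v.
exact: ltW.
Qed.

Lemma sum_gibbs (lam : V -> R) :
  (forall v, 0 < lam v) -> \sum_sigma gibbs lam sigma = 1.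
Proof.
by move=> lam_gt0; rewrite -mulr_suml divff // gt_eqF ?partition_fn_gt0.
Qed.

Section FieldOnS.

Variables (S : {set V}) (lam : R).
Hypothesis lam_gt0 : 0 < lam.

Let field_vec_gt0 (x : R) : 0 < x -> forall v, 0 < field_vec S x lam v.
Proof. by move=> x_gt0 v; rewrite /field_vec; case: (v \in S). Qed.

Let weight1_ge0 sigma : 0 <= weight (field_vec S 1 lam) sigma.
Proof. by apply: weight_ge0 => v; rewrite ltW ?field_vec_gt0. Qed.

Lemma weight_field_vec_le (lo hi : R) sigma : 0 <= lo -> lo <= hi ->
  weight (field_vec S lo lam) sigma <= weight (field_vec S hi lam) sigma.
Proof.
move=> lo_ge0 lo_le_hi.
rewrite (weight_field_vec S lo) (weight_field_vec S hi) ler_wpM2r //.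
by rewrite lerXn2r // nnegrE (le_trans lo_ge0).
Qed.

Lemma weight_field_vec_ge (lo hi : R) sigma : 0 <= lo -> 0 < hi -> lo <= hi ->
  (lo / hi) ^+ #|S| * weight (field_vec S hi lam) sigma
  <= weight (field_vec S lo lam) sigma.
Proof.
move=> lo_ge0 hi_gt0 lo_le_hi.
rewrite (weight_field_vec S lo) (weight_field_vec S hi) mulrA ler_wpM2r //.
set k := #|[set v in S | sigma v]|.
have k_le : (k <= #|S|)%N.
  by apply/subset_leq_card/subsetP => v; rewrite inE => /andP[].
have -> : lo ^+ k = (lo / hi) ^+ k * hi ^+ k by rewrite -exprMn divfK ?gt_eqF.
rewrite ler_wpM2r ?exprn_ge0 ?(ltW hi_gt0) // ler_wiXn2l //.
- by rewrite divr_ge0 // ltW.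
- by rewrite ler_pdivrMr // mul1r.
Qed.

Lemma gibbs_field_vec_dominated (lo hi : R) sigma : 0 < lo -> lo <= hi ->
  (lo / hi) ^+ #|S| * gibbs (field_vec S lo lam) sigma
  <= gibbs (field_vec S hi lam) sigma.
Proof.
move=> lo_gt0 lo_le_hi; have hi_gt0 := lt_le_trans lo_gt0 lo_le_hi.
have Zlo_gt0 := partition_fn_gt0 (field_vec_gt0 lo_gt0).
have Zhi_gt0 := partition_fn_gt0 (field_vec_gt0 hi_gt0).
have Z_dominated : (lo / hi) ^+ #|S| * partition_fn (field_vec S hi lam)
                   <= partition_fn (field_vec S lo lam).
  rewrite mulr_sumr; apply: ler_sum => tau _.
  exact: weight_field_vec_ge (ltW lo_gt0) hi_gt0 lo_le_hi.
have wlo_ge0 : 0 <= weight (field_vec S lo lam) sigma.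
  by apply: weight_ge0 => v; rewrite ltW ?field_vec_gt0.
rewrite /gibbs mulrA ler_pdivrMr // mulrAC ler_pdivlMr //.
apply: le_trans (_ : _ <= weight (field_vec S lo lam) sigma *
                          partition_fn (field_vec S lo lam)) _.
  by rewrite -mulrA mulrCA ler_wpM2l.
by rewrite ler_wpM2r ?weight_field_vec_le // ltW.
Qed.

Lemma spin_expect_field_vec_dist (lo hi : R) v : 0 < lo -> lo <= hi ->
  `| spin_expect E beta gamma (field_vec S hi lam) v
     - spin_expect E beta gamma (field_vec S lo lam) v |
  <= #|S|%:R * (1 - lo / hi).
Proof.
move=> lo_gt0 lo_le_hi; have hi_gt0 := lt_le_trans lo_gt0 lo_le_hi.
have q_ge0 : 0 <= lo / hi by rewrite divr_ge0 // ltW.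
have q_le1 : lo / hi <= 1 by rewrite ler_pdivrMr // mul1r.
apply: le_trans (one_sub_exprn_le _ q_ge0 q_le1).
rewrite /spin_expect.
apply: dist_expect_dominated => [sigma | | | sigma | sigma].
- exact: gibbs_ge0 (field_vec_gt0 lo_gt0).
- exact: sum_gibbs (field_vec_gt0 lo_gt0).
- exact: sum_gibbs (field_vec_gt0 hi_gt0).
- exact: gibbs_field_vec_dominated.
- by case: (sigma v); rewrite ?ler01 ?lexx.
Qed.

Lemma spin_expect_field_vec_dist_ratio (lam1 lam2 : R) v :
  0 < lam1 -> 0 < lam2 ->
  `| spin_expect E beta gamma (field_vec S lam2 lam) v
     - spin_expect E beta gamma (field_vec S lam1 lam) v |
  <= #|S|%:R * `| lam2 / lam1 - 1 |.
Proof.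
move=> lam1_gt0 lam2_gt0.
have [lam12 | lam21] := lerP lam1 lam2.
- apply: le_trans (spin_expect_field_vec_dist v lam1_gt0 lam12) _.
  rewrite ler_wpM2l // -[lam1 / lam2]invf_div.
  set b := lam2 / lam1.
  have b_ge1 : 1 <= b by rewrite ler_pdivlMr // mul1r.
  have binv_le1 : b^-1 <= 1 by rewrite invf_le1 // (lt_le_trans ltr01).
  have b_binv : b * b^-1 = 1 by rewrite divff // gt_eqF // (lt_le_trans ltr01).
  rewrite ger0_norm ?subr_ge0 //; nra.
- rewrite distrC.
  apply: le_trans (spin_expect_field_vec_dist v lam2_gt0 (ltW lam21)) _.
  by rewrite distrC ger0_norm // subr_ge0 ler_pdivrMr // mul1r ltW.
Qed.

End FieldOnS.

End AntiferroGibbs.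

Theorem lemma5p2 (R : realFieldType) (beta gamma lam lam1 lam2 : R)
  (V : finType) (E : {set {set V}}) (S : {set V}) :
  antiferro beta gamma -> 0 < lam -> 0 < lam1 -> 0 < lam2 ->
  simple_graph E ->
  forall v : V,
    `| spin_expect E beta gamma (field_vec S lam2 lam) v
       - spin_expect E beta gamma (field_vec S lam1 lam) v |
    <= 2 * #|S|%:R * `| lam2 / lam1 - 1 |.
Proof.
move=> [beta_ge0 [gamma_ge0 [_ beta_gamma_neq0]]] lam_gt0 lam1_gt0 lam2_gt0.
move=> E_simple v.
apply: le_trans (spin_expect_field_vec_dist_ratio beta_ge0 gamma_ge0
  beta_gamma_neq0 E_simple S lam_gt0 v lam1_gt0 lam2_gt0) _.
by rewrite -mulrA ler_peMl ?mulr_ge0 ?ler1n.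
Qed.
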